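(* Let $\mathcal H$ be a family of graphs. The following are equivalent: (i) there are constants $c_1=c_1(\mathcal H)$ and $c_2=c_2(\mathcal H)$ such that every $\mathcal H$-free graph $G$ has fewer than $c_2$ vertices of degree at least $c_1$; (ii) there is a positive integer $n$ such that $\mathcal H\le\{K_n,\ K_{n,n},\ nK_{1,n}\}$.
   Context: All graphs are finite, simple, undirected. For graphs $H_1,H_2$, write $H_1\prec H_2$ if $H_2$ contains an induced subgraph isomorphic to $H_1$. A graph $G$ is $\mathcal H$-free if no $H\in\mathcal H$ satisfies $H\prec G$. For families $\mathcal H_1,\mathcal H_2$, write $\mathcal H_1\le\mathcal H_2$ if for every $H_2\in\mathcal H_2$ there is $H_1\in\mathcal H_1$ with $H_1\prec H_2$. $K_n$ is the complete graph, $K_{s,t}$ the complete bipartite graph, and $nG$ the disjoint union of $n$ copies of $G$. *)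

From mathcomp Require Import all_boot.
Set Implicit Arguments. Unset Strict Implicit. Unset Printing Implicit Defensive.

Record sgraph := SGraph {
  vert :> finType;
  adj : rel vert;
  adj_sym : symmetric adj;
  adj_irr : irreflexive adj }.

Definition induced_sub (H1 H2 : sgraph) : Prop :=
  exists f : vert H1 -> vert H2, injective f /\
    forall x y : vert H1, adj (f x) (f y) = adj x y.

Definition gfamily := sgraph -> Prop.

Definition H_free (F : gfamily) (G : sgraph) : Prop :=
  forall H, F H -> ~ induced_sub H G.

Definition fam_le (F1 F2 : gfamily) : Prop :=
  forall H2, F2 H2 -> exists2 H1, F1 H1 & induced_sub H1 H2.

Definition deg (G : sgraph) (v : vert G) : nat := #|[set u | adj v u]|.

Definition Kn_adj n : rel 'I_n := fun x y => x != y.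
Lemma Kn_sym n : symmetric (@Kn_adj n). Proof. by move=> x y; rewrite /Kn_adj eq_sym. Qed.
Lemma Kn_irr n : irreflexive (@Kn_adj n). Proof. by move=> x; rewrite /Kn_adj eqxx. Qed.
Definition K_ (n : nat) : sgraph := SGraph (@Kn_sym n) (@Kn_irr n).

Definition Kst_adj s t : rel ('I_s + 'I_t)%type := fun x y =>
  match x, y with inl _, inr _ | inr _, inl _ => true | _, _ => false end.
Lemma Kst_sym s t : symmetric (@Kst_adj s t). Proof. by case=> ? [] ?. Qed.
Lemma Kst_irr s t : irreflexive (@Kst_adj s t). Proof. by case. Qed.
Definition K2_ (s t : nat) : sgraph := SGraph (@Kst_sym s t) (@Kst_irr s t).

(* m K_{1,t}: vertices (i, None) are the centres, (i, Some k) the leaves of copy i. *)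
Definition mstar_adj m t : rel ('I_m * option 'I_t)%type := fun x y =>
  (x.1 == y.1) && ((x.2 == None) != (y.2 == None)).
Lemma mstar_sym m t : symmetric (@mstar_adj m t).
Proof. by move=> x y; rewrite /mstar_adj eq_sym; congr (_ && _); case: (_ == None); case: (_ == None). Qed.
Lemma mstar_irr m t : irreflexive (@mstar_adj m t).
Proof. by move=> x; rewrite /mstar_adj eqxx /=; case: (_ == None). Qed.
Definition mK1_ (m t : nat) : sgraph := SGraph (@mstar_sym m t) (@mstar_irr m t).

Definition special_family (n : nat) : gfamily :=
  fun G => G = K_ n \/ G = K2_ n n \/ G = mK1_ n n.

(* If G contains none of K_n, K_{n,n},
   nK_{1,n} as induced subgraphs, then by Ramsey's theorem G contains no t-biclique (two
   t-sets, t = 4^n, with all edges between them, induced or not). Hence for any large set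
   Y, fewer than t vertices are adjacent to almost all of Y. Among many vertices of high
   degree, Ramsey gives a large independent set of candidate centres, whose neighbourhoods
   are the candidate leaves. The n stars are chosen one vertex at a time; each new vertex
   is chosen far (distinct and non-adjacent) from almost all remaining candidates, which
   then shrink by a factor of about t only. After n(n+1) steps an induced nK_{1,n} is built.
   Conversely K_N, K_{N,N} and NK_{1,N} have N vertices of degree at least N - 1. *)

From Stdlib Require Import Classical.
From mathcomp Require Import all_boot zify.
Set Implicit Arguments. Unset Strict Implicit. Unset Printing Implicit Defensive.

Lemma card_bigcup_le (T I : finType) (r : seq I) (P : pred I) (F : I -> {set T}) :
  #|\bigcup_(i <- r | P i) F i| <= \sum_(i <- r | P i) #|F i|.
Proof.
elim/big_rec2: _ => [|i n U _ le_U]; first by rewrite cards0.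
by rewrite (leq_trans (leq_card_setU (F i) U).1) ?leq_add2l.
Qed.

Lemma exists_inj_in (T : finType) (A : {set T}) m :
  m <= #|A| -> exists2 f : 'I_m -> T, injective f & forall i, f i \in A.
Proof.
move=> le_mA; exists (fun i => enum_val (widen_ord le_mA i)).
  by move=> i j /enum_val_inj /(congr1 val) /= /val_inj.
by move=> i; apply: enum_valP.
Qed.

Lemma leq_ord_card (T : finType) (A : {set T}) m (f : 'I_m -> T) :
  injective f -> (forall i, f i \in A) -> m <= #|A|.
Proof.
move=> inj_f fA; rewrite -[m]card_ord -(card_imset _ inj_f).
by apply/subset_leq_card/subsetP => _ /imsetP[i _ ->].
Qed.

Lemma exists_subset_card (T : finType) (A : {set T}) m :
  m <= #|A| -> exists2 B : {set T}, B \subset A & #|B| = m.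
Proof.
case/exists_inj_in => f inj_f fA; exists (f @: 'I_m).
  by apply/subsetP => _ /imsetP[i _ ->].
by rewrite card_imset // card_ord.
Qed.

Lemma exists_outside_small_sets (T : finType) (Bs : seq {set T}) (R : {set T}) k :
  (forall B, B \in Bs -> #|B| <= k) -> size Bs * k < #|R| ->
  exists2 x, x \in R & forall B, B \in Bs -> x \notin B.
Proof.
move=> small_Bs lt_R; set U := \bigcup_(B <- Bs) B.
have le_U : #|U| <= \sum_(B <- Bs) k.
  apply: leq_trans (card_bigcup_le _ _ _) _; rewrite big_seq [leqRHS]big_seq.
  exact: leq_sum.
rewrite big_const_seq count_predT iter_addn_0 mulnC in le_U.
have /card_gt0P[x] : 0 < #|R :\: U|.
  rewrite cardsD subn_gt0 (leq_ltn_trans (subset_leq_card (subsetIr R U))) //.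
  exact: leq_ltn_trans le_U lt_R.
rewrite inE => /andP[xU xR]; exists x => // B BBs.
by apply: contra xU => xB; rewrite /U bigcup_seq; apply/bigcupP; exists B.
Qed.

Lemma exists_sparse_row (T : finType) (P : {set T}) (D : rel T) k :
  P != set0 -> (forall u, u \in P -> #|[set x in P | D x u]| < k) ->
  exists2 v, v \in P & #|[set u in P | D v u]| < k.
Proof.
move=> /set0Pn[u0 u0P] sparse_cols.
have cardE (f : pred T) : #|[set u in P | f u]| = \sum_(u in P) f u.
  rewrite -sum1_card big_mkcond /= [RHS]big_mkcond /=.
  by apply: eq_bigr => u _; rewrite !inE; case: (u \in P); case: (f u).
case: (pickP [pred v in P | #|[set u in P | D v u]| < k]) => [v /andP[vP lt_v] | dense_rows].
  by exists v.
have rows : \sum_(v in P) k <= \sum_(v in P) \sum_(u in P) D v u.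
  apply: leq_sum => v vP; rewrite -cardE leqNgt.
  by have := dense_rows v; rewrite /= vP => /negbT.
have cols : \sum_(u in P) \sum_(v in P) D v u <= \sum_(u in P) k.-1.
  by apply: leq_sum => u uP; rewrite -cardE; have := sparse_cols u uP; lia.
rewrite exchange_big /= in rows.
have := leq_trans rows cols; rewrite !sum_nat_const.
have : 0 < #|P| by apply/card_gt0P; exists u0.
have := sparse_cols u0 u0P; nia.
Qed.

Lemma induced_sub_trans (H1 H2 H3 : sgraph) :
  induced_sub H1 H2 -> induced_sub H2 H3 -> induced_sub H1 H3.
Proof.
move=> [f [inj_f adj_f]] [g [inj_g adj_g]]; exists (g \o f); split.
  exact: inj_comp.
by move=> x y /=; rewrite adj_g adj_f.
Qed.

Lemma special_family_high_deg n (H : sgraph) :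
  special_family n.+1 H -> n.+1 <= #|[set v : H | n <= deg v]|.
Proof.
case=> [->|[->|->]].
- apply: (@leq_ord_card _ _ _ id) => // v; rewrite inE /deg.
  apply: (@leq_ord_card _ _ _ (lift v)); first exact: lift_inj.
  by move=> j; rewrite inE /= /Kn_adj neq_lift.
- apply: (@leq_ord_card _ _ _ inl); first by move=> i j [].
  move=> i; rewrite inE /deg; apply/ltnW/(@leq_ord_card _ _ _ inr).
    by move=> j j' [].
  by move=> j; rewrite inE.
- pose star (i : 'I_n.+1) o : vert (mK1_ n.+1 n.+1) := (i, o).
  apply: (@leq_ord_card _ _ _ (star^~ None)); first by move=> i j [].
  move=> i; rewrite inE /deg; apply/ltnW/(@leq_ord_card _ _ _ (star i \o Some)).
    by move=> j j' [].
  by move=> j; rewrite inE /= /mstar_adj /= eqxx.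
Qed.

Lemma fam_le_special_of_bounded (F : gfamily) c1 c2 :
  (forall G : sgraph, H_free F G -> #|[set v : G | c1 <= deg v]| < c2) ->
  fam_le F (special_family (c1 + c2).+1).
Proof.
move=> bounded H specH; apply: NNPP => noF.
have freeH : H_free F H by move=> H1 FH1 indH1; apply: noF; exists H1.
have := bounded H freeH; apply/negP; rewrite -leqNgt.
apply: leq_trans (leq_trans (special_family_high_deg specH) _); first lia.
by apply/subset_leq_card/subsetP => v; rewrite !inE; apply: leq_trans; apply: leq_addr.
Qed.

Section Graph.
Variable G : sgraph.
Implicit Types (C I J L P R S X Y : {set G}) (M : G -> {set G}).

Definition nbhd (v : G) : {set G} := [set u | adj v u].
Definition far (x y : G) := (x != y) && ~~ adj x y.
Definition far_in (Y : {set G}) (x : G) : {set G} := [set y in Y | far x y].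
Definition clique (C : {set G}) := {in C &, forall x y, x != y -> adj x y}.
Definition indep (I : {set G}) := {in I &, forall x y, ~~ adj x y}.

Lemma far_sym : symmetric far.
Proof. by move=> x y; rewrite /far eq_sym adj_sym. Qed.

Lemma far_in_sub Y x : far_in Y x \subset Y.
Proof. by apply/subsetP => y; rewrite inE => /andP[]. Qed.

Lemma clique_setU1 x C : clique C -> {in C, forall y, adj x y} -> clique (x |: C).
Proof.
move=> cC adj_x y z; rewrite !inE => /orP[/eqP-> | yC] /orP[/eqP-> | zC].
- by rewrite eqxx.
- by move=> _; apply: adj_x.
- by move=> _; rewrite adj_sym; apply: adj_x.
- exact: cC.
Qed.

Lemma indep_setU1 x I : indep I -> {in I, forall y, ~~ adj x y} -> indep (x |: I).
Proof.
move=> iI nadj_x y z; rewrite !inE => /orP[/eqP-> | yI] /orP[/eqP-> | zI].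
- by rewrite adj_irr.
- exact: nadj_x.
- by rewrite adj_sym; apply: nadj_x.
- exact: iI.
Qed.

Lemma ramsey a b (S : {set G}) : 2 ^ (a + b) <= #|S| ->
  (exists2 C : {set G}, C \subset S & clique C /\ a <= #|C|) \/
  (exists2 I : {set G}, I \subset S & indep I /\ b <= #|I|).
Proof.
elim: a b S => [|a IHa] b S.
  by left; exists set0; rewrite ?sub0set //; split=> // x y; rewrite inE.
elim: b S => [|b IHb] S le_S.
  by right; exists set0; rewrite ?sub0set //; split=> // x y; rewrite inE.
have /card_gt0P[x xS] : 0 < #|S| by apply: leq_trans le_S; rewrite expn_gt0.
set N := (S :\ x) :&: nbhd x; set M := (S :\ x) :\: nbhd x.
have NS : N \subset S by apply/subsetP => y; rewrite !inE => /andP[/andP[_ ->]].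
have MS : M \subset S by apply/subsetP => y; rewrite !inE => /andP[_ /andP[_ ->]].
have [le_N | le_M] : 2 ^ (a + b.+1) <= #|N| \/ 2 ^ (a.+1 + b) <= #|M|.
  move: le_S; have := cardsID (nbhd x) (S :\ x); have := cardsD1 x S.
  rewrite xS -/N -/M !(addnS, addSn) !expnS; lia.
- case: (IHa _ _ le_N) => [[C CN [cC le_C]] | [I IN [iI le_I]]]; last first.
    by right; exists I => //; apply: subset_trans NS.
  have xC : x \notin C by apply/negP => /(subsetP CN); rewrite !inE eqxx.
  left; exists (x |: C); first by rewrite subUset sub1set xS (subset_trans CN NS).
  split; last by rewrite cardsU1 xC.
  by apply: clique_setU1 => // y /(subsetP CN); rewrite !inE => /andP[_].
- case: (IHb _ le_M) => [[C CM [cC le_C]] | [I IM [iI le_I]]].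
    by left; exists C => //; apply: subset_trans MS.
  have xI : x \notin I by apply/negP => /(subsetP IM); rewrite !inE eqxx andbF.
  right; exists (x |: I); first by rewrite subUset sub1set xS (subset_trans IM MS).
  split; last by rewrite cardsU1 xI.
  by apply: indep_setU1 => // y /(subsetP IM); rewrite !inE => /andP[].
Qed.

Lemma induced_K_of_clique n C : clique C -> n <= #|C| -> induced_sub (K_ n) G.
Proof.
move=> cC /exists_inj_in[f inj_f fC]; exists f; split=> // i j /=.
rewrite /Kn_adj; have [-> | neq_ij] := eqVneq i j; first by rewrite adj_irr.
by apply: cC; rewrite ?fC ?(inj_eq inj_f).
Qed.

Lemma induced_K2_of_indep n I J : indep I -> indep J -> n <= #|I| -> n <= #|J| ->
  {in I & J, forall x y, adj x y} -> induced_sub (K2_ n n) G.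
Proof.
move=> iI iJ /exists_inj_in[f inj_f fI] /exists_inj_in[g inj_g gJ] adjIJ.
pose h (z : 'I_n + 'I_n) := match z with inl i => f i | inr j => g j end.
exists h; split.
- move=> [i|i] [j|j] /= e.
  + by rewrite (inj_f _ _ e).
  + by have := adjIJ _ _ (fI i) (gJ j); rewrite e adj_irr.
  + by have := adjIJ _ _ (fI j) (gJ i); rewrite e adj_irr.
  + by rewrite (inj_g _ _ e).
- move=> [i|i] [j|j] /=.
  + exact/negbTE/iI.
  + exact: adjIJ.
  + by rewrite adj_sym; apply: adjIJ.
  + exact/negbTE/iJ.
Qed.

Lemma Kn_free_indep n b (S : {set G}) : ~ induced_sub (K_ n) G ->
  2 ^ (n + b) <= #|S| -> exists2 I : {set G}, I \subset S & indep I /\ b <= #|I|.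
Proof.
move=> noK /ramsey[[C _ [cC le_C]] | //].
by case: noK; apply: induced_K_of_clique cC le_C.
Qed.

Definition biclique_free t := forall X Y : {set G},
  t <= #|X| -> t <= #|Y| -> ~ {in X & Y, forall x y, adj x y}.

Lemma biclique_free_pow n : ~ induced_sub (K_ n) G -> ~ induced_sub (K2_ n n) G ->
  biclique_free (2 ^ (n + n)).
Proof.
move=> noK noK2 X Y /(Kn_free_indep noK)[I IX [iI le_I]].
move=> /(Kn_free_indep noK)[J JY [iJ le_J]] adjXY.
apply: noK2 (induced_K2_of_indep iI iJ le_I le_J _) => x y xI yJ.
exact: adjXY (subsetP IX x xI) (subsetP JY y yJ).
Qed.

Definition star_ok n (s : option 'I_n -> G) :=
  injective s /\ forall o o', adj (s o) (s o') = ((o == None) != (o' == None)).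

Definition star_packing m n (F : nat -> option 'I_n -> G) :=
  (forall i, i < m -> star_ok (F i)) /\
  (forall i j o o', i < m -> j < m -> i != j -> far (F i o) (F j o')).

Lemma induced_mK1_of_packing m n (F : nat -> option 'I_n -> G) :
  star_packing m F -> induced_sub (mK1_ m n) G.
Proof.
case=> starF farF; exists (fun z : 'I_m * option 'I_n => F z.1 z.2); split.
- move=> [i o] [j o'] /= eqF; have [eq_ij | neq_ij] := eqVneq (val i) (val j).
    have eq_o := (starF i (ltn_ord i)).1 o o'; rewrite (val_inj eq_ij) in eqF eq_o *.
    by rewrite eq_o.
  by have := farF i j o o' (ltn_ord i) (ltn_ord j) neq_ij; rewrite /far eqF eqxx.
- move=> [i o] [j o']; rewrite /= /mstar_adj /=.
  have [eq_ij | neq_ij] := eqVneq (val i) (val j).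
    by rewrite (val_inj eq_ij) eqxx (starF j (ltn_ord j)).2.
  have := farF i j o o' (ltn_ord i) (ltn_ord j) neq_ij; rewrite /far => /andP[_ /negbTE->].
  by rewrite -(inj_eq val_inj) (negbTE neq_ij).
Qed.

Lemma star_of_leaves n v (L : {set G}) : #|L| = n -> indep L -> L \subset nbhd v ->
  exists2 s : option 'I_n -> G, star_ok s & forall o, s o \in v |: L.
Proof.
move=> cardL iL Lv; have [f inj_f fL] := @exists_inj_in _ L n (eq_leq (esym cardL)).
have adj_vf a : adj v (f a) by have := subsetP Lv _ (fL a); rewrite inE.
exists (fun o => if o is Some a then f a else v); last first.
  by case=> [a|]; rewrite !inE ?fL ?eqxx ?orbT.
split.
- case=> [a|] [b|] //= e.
  + by rewrite (inj_f _ _ e).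
  + by have := adj_vf a; rewrite e adj_irr.
  + by have := adj_vf b; rewrite -e adj_irr.
- case=> [a|] [b|] /=.
  + exact/negbTE/iL.
  + by rewrite adj_sym adj_vf.
  + by rewrite adj_vf.
  + by rewrite adj_irr.
Qed.

Section Biclique_free.
Variable t : nat.
Hypothesis no_biclique : biclique_free t.

Lemma biclique_bound_gt0 : 0 < t.
Proof.
rewrite lt0n; apply/eqP => t0.
by apply: (@no_biclique set0 set0); rewrite ?t0 // => x y; rewrite inE.
Qed.

(* [t] such vertices miss fewer than [t * s] vertices of [Y] in total, so at least [t]
   vertices of [Y] are adjacent to all of them: a biclique. *)
Lemma card_near_lt s (Y : {set G}) : t * s.+1 <= #|Y| -> #|[set x | #|far_in Y x| < s]| < t.
Proof.
case: s => [|s] le_Y.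
  have -> : [set x | #|far_in Y x| < 0] = set0 by apply/setP => x; rewrite !inE.
  by rewrite cards0 biclique_bound_gt0.
rewrite ltnNge; apply/negP => /exists_subset_card[X Xnear cardX].
set B := \bigcup_(x in X) far_in Y x; set Z := Y :\: X :\: B.
have le_B : #|B| <= t * s.
  apply: leq_trans (card_bigcup_le _ _ _) _; rewrite -cardX -sum_nat_const.
  by apply: leq_sum => x /(subsetP Xnear); rewrite inE.
have le_Z : t <= #|Z|.
  rewrite !cardsD; have := subset_leq_card (subsetIr Y X).
  have := subset_leq_card (subsetIr (Y :\: X) B); nia.
apply: (@no_biclique X Z); rewrite ?cardX // => x y xX.
rewrite !inE => /and3P[yB yX yY].
have : y \notin far_in Y x by apply: contra yB => yF; apply/bigcupP; exists x.
rewrite inE yY /= /far negb_and !negbK => /orP[/eqP xy | //].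
by move: yX; rewrite -xy xX.
Qed.

Fixpoint tower base j := if j is j'.+1 then t * (tower base j').+1 else base.

Lemma tower_leS base j : tower base j <= tower base j.+1.
Proof. by rewrite /= -[X in X <= _]mul1n leq_mul ?biclique_bound_gt0. Qed.

Lemma tower_ge base j : base <= tower base j.
Proof. by elim: j => // j IHj; apply: leq_trans IHj (tower_leS _ _). Qed.

Section Pool.
Variable pmax : nat.

(* Candidate centres [P] and, for each centre [u], candidate leaves [M u]. Each vertex
   chosen costs one level, dividing both size bounds by about [t]. The cap [pmax] bounds
   the number of candidate sets a new leaf has to avoid, hence the base [pmax.+2 * t]. *)
Definition pool lev (P : {set G}) (M : G -> {set G}) :=
  [/\ indep P, #|P| <= pmax, tower 1 lev <= #|P|,
      forall u, u \in P -> tower (pmax.+2 * t) lev <= #|M u|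
    & forall u, u \in P -> M u \subset nbhd u].

Definition support (P : {set G}) (M : G -> {set G}) := P :|: \bigcup_(u in P) M u.

Definition residual lev (X : {set G}) P M P' M' :=
  [/\ pool lev P' M', support P' M' \subset support P M
    & {in X & support P' M', forall x y, far x y}].

Lemma pool_nonempty lev P M : pool lev P M -> P != set0.
Proof. by case=> _ _ le_P _ _; rewrite -card_gt0 (leq_trans (tower_ge 1 lev)). Qed.

Lemma pool_sub lev lev' P M P' M' : pool lev P M ->
  P' \subset P -> (forall u, u \in P' -> M' u \subset M u) ->
  tower 1 lev' <= #|P'| -> (forall u, u \in P' -> tower (pmax.+2 * t) lev' <= #|M' u|) ->
  pool lev' P' M'.
Proof.
case=> iP le_P _ _ MN sPP' sMM' ge_P' ge_M'; split=> //.
- by move=> x y /(subsetP sPP') xP /(subsetP sPP') yP; apply: iP.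
- exact: leq_trans (subset_leq_card sPP') le_P.
- by move=> u uP'; apply: subset_trans (sMM' u uP') (MN u (subsetP sPP' u uP')).
Qed.

Lemma support_sub P M P' M' : P' \subset P ->
  (forall u, u \in P' -> M' u \subset M u) -> support P' M' \subset support P M.
Proof.
move=> sPP' sMM'; rewrite setUSS //; apply/bigcupsP => u uP'.
by apply: subset_trans (sMM' u uP') _; apply: bigcup_sup (subsetP sPP' u uP').
Qed.

Lemma residual_trans lev lev' X Y P M P1 M1 P2 M2 :
  residual lev X P M P1 M1 -> residual lev' Y P1 M1 P2 M2 ->
  residual lev' (X :|: Y) P M P2 M2.
Proof.
case=> _ s1 far1 [pool2 s2 far2]; split=> //; first exact: subset_trans s2 s1.
move=> x y; rewrite inE => /orP[xX | xY] y2; last exact: far2.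
exact: far1 xX (subsetP s2 y y2).
Qed.

Lemma residual_far_in lev l P M P' : P' \subset far_in P l ->
  pool lev P' (fun u => far_in (M u) l) ->
  residual lev [set l] P M P' (fun u => far_in (M u) l).
Proof.
move=> sP' poolP'; split=> //.
  apply: support_sub => [|u _]; last exact: far_in_sub.
  exact: subset_trans sP' (far_in_sub _ _).
by move=> _ y /set1P-> /setUP[/(subsetP sP') | /bigcupP[u _]]; rewrite inE => /andP[].
Qed.

Lemma pool_leaf lev P M R : pool lev.+1 P M -> tower (pmax.+2 * t) lev.+1 <= #|R| ->
  exists2 l, l \in R & residual lev [set l] P M (far_in P l) (fun u => far_in (M u) l)
    /\ tower (pmax.+2 * t) lev <= #|far_in R l|.
Proof.
move=> poolP ge_R; have [_ le_P ge_P ge_M _] := poolP.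
pose near Y s := [set x | #|far_in Y x| < s].
pose Bs := near P (tower 1 lev) :: near R (tower (pmax.+2 * t) lev)
  :: [seq near (M u) (tower (pmax.+2 * t) lev) | u <- enum P].
have [l lR far_l] : exists2 l, l \in R & forall B, B \in Bs -> l \notin B.
  have small Y s : t * s.+1 <= #|Y| -> #|near Y s| <= t.-1.
    by move/card_near_lt; rewrite /near; lia.
  apply: (@exists_outside_small_sets _ _ _ t.-1).
    move=> B; rewrite !in_cons => /or3P[/eqP-> | /eqP-> | /mapP[u]].
    - exact: small ge_P.
    - exact: small ge_R.
    - by rewrite mem_enum => uP ->; apply: small (ge_M u uP).
  rewrite /= size_map -cardE.
  move: le_P ge_R (tower_ge (pmax.+2 * t) lev.+1) biclique_bound_gt0; nia.
have farP : tower 1 lev <= #|far_in P l|.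
  by have := far_l _ (mem_head _ _); rewrite inE -leqNgt.
have farR : tower (pmax.+2 * t) lev <= #|far_in R l|.
  have := far_l (near R (tower (pmax.+2 * t) lev)).
  by rewrite !in_cons eqxx orbT inE -leqNgt => ->.
exists l => //; split=> //; apply: residual_far_in => //.
apply: (pool_sub poolP) => // [|u|u]; first exact: far_in_sub.
- by move=> _; apply: far_in_sub.
- rewrite inE => /andP[uP _].
  have uBs : near (M u) (tower (pmax.+2 * t) lev) \in Bs.
    by rewrite !in_cons; apply/or3P; constructor 3; apply/mapP; exists u; rewrite ?mem_enum.
  by have := far_l _ uBs; rewrite inE -leqNgt.
Qed.

Lemma pool_leaves lev j P M R : pool (lev + j) P M -> tower (pmax.+2 * t) (lev + j) <= #|R| ->
  exists L P' M', [/\ L \subset R, #|L| = j, indep L & residual lev L P M P' M'].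
Proof.
elim: j P M R => [|j IHj] P M R.
  rewrite addn0 => poolP _; exists set0, P, M; split; rewrite ?sub0set ?cards0 //.
    by move=> x y; rewrite inE.
  by split=> // x y; rewrite inE.
rewrite addnS => poolP ge_R.
have [l lR [res_l ge_Rl]] := pool_leaf poolP ge_R.
have [pool_l _ _] := res_l.
have [L [P' [M' [LR cardL iL res_L]]]] := IHj _ _ _ pool_l ge_Rl.
have far_lL y : y \in L -> far l y by move/(subsetP LR); rewrite inE => /andP[].
exists (l |: L), P', M'; split.
- by rewrite subUset sub1set lR (subset_trans LR (far_in_sub _ _)).
- have lL : l \notin L by apply/negP => /far_lL; rewrite /far eqxx.
  by rewrite cardsU1 lL cardL.
- by apply: indep_setU1 => // y /far_lL /andP[].
- exact: residual_trans res_l res_L.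
Qed.

Lemma pool_center lev P M : pool lev.+1 P M ->
  exists v P1 M1, [/\ v \in P, tower (pmax.+2 * t) lev <= #|M v|
    & residual lev [set v] P M P1 M1].
Proof.
move=> poolP; have [iP _ ge_P ge_M _] := poolP.
pose bad x u := #|far_in (M u) x| < tower (pmax.+2 * t) lev.
have [v vP sparse_v] : exists2 v, v \in P & #|[set u in P | bad v u]| < t.
  apply: exists_sparse_row (pool_nonempty poolP) _ => u uP.
  apply: leq_ltn_trans (card_near_lt (ge_M u uP)).
  by apply/subset_leq_card/subsetP => x; rewrite !inE => /andP[].
have farPv : far_in P v = P :\ v.
  apply/setP => u; rewrite !inE /far eq_sym.
  by case uP: (u \in P); rewrite /= ?andbF // (iP v u vP uP) andbT.
exists v, (far_in P v :\: [set u | bad v u]), (fun u => far_in (M u) v); split=> //.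
  exact: leq_trans (tower_leS _ _) (ge_M v vP).
apply: residual_far_in; first exact: subsetDl.
apply: (pool_sub poolP) => [|u _||].
- exact: subset_trans (subsetDl _ _) (far_in_sub _ _).
- exact: far_in_sub.
- rewrite cardsD farPv; have := cardsD1 v P; rewrite vP.
  have : #|(P :\ v) :&: [set u | bad v u]| <= #|[set u in P | bad v u]|.
    by apply/subset_leq_card/subsetP => u; rewrite !inE => /andP[/andP[_ ->] ->].
  move: ge_P sparse_v => /=; nia.
- by move=> u; rewrite !inE leqNgt => /andP[].
Qed.

Lemma pool_star n lev P M : pool (lev + n).+1 P M ->
  exists v L P' M', [/\ L \subset nbhd v, #|L| = n, indep L,
    v |: L \subset support P M & residual lev (v |: L) P M P' M'].
Proof.
move=> poolP; have [_ _ _ _ MN] := poolP.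
have [v [P1 [M1 [vP ge_Mv res_v]]]] := pool_center poolP.
have [pool1 _ _] := res_v.
have [L [P' [M' [LM cardL iL res_L]]]] := pool_leaves pool1 ge_Mv.
exists v, L, P', M'; split=> //.
- exact: subset_trans LM (MN v vP).
- rewrite subUset sub1set !inE vP /=; apply: subset_trans LM _.
  by apply: subset_trans (bigcup_sup _ vP) (subsetUr _ _).
- exact: residual_trans res_v res_L.
Qed.

Lemma pool_stars n m P M : pool (m * n.+1) P M ->
  exists F : nat -> option 'I_n -> G,
    star_packing m F /\ forall i o, i < m -> F i o \in support P M.
Proof.
elim: m P M => [|m IHm] P M poolP.
  by have /set0Pn[x0 _] := pool_nonempty poolP; exists (fun _ _ => x0).
rewrite mulSn addnC -addSnnS in poolP.
have [v [L [P' [M' [Lv cardL iL sL [pool' sP' far']]]]]] := pool_star poolP.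
have [s star_s sL'] := star_of_leaves cardL iL Lv.
have [F [[starF farF] inF]] := IHm _ _ pool'.
exists (fun i => if i is i'.+1 then F i' else s); split; last first.
  by case=> [|i] o lt_i; [apply: (subsetP sL) | apply: (subsetP sP'); apply: inF].
split; first by case.
have far_sF j o o' : j < m -> far (s o) (F j o') by move=> lt_j; apply: far' (inF _ _ lt_j).
case=> [|i] [|j] o o' //= lt_i lt_j neq_ij; first exact: far_sF.
  by rewrite far_sym; apply: far_sF.
exact: farF.
Qed.

End Pool.
End Biclique_free.
End Graph.

Lemma special_free_high_deg_bounded n : exists c1 c2, forall G : sgraph,
  (forall H, special_family n H -> ~ induced_sub H G) ->
  #|[set v : G | c1 <= deg v]| < c2.
Proof.
pose t := 2 ^ (n + n); pose pmax := tower t 1 (n * n.+1).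
exists (tower t (pmax.+2 * t) (n * n.+1)), (2 ^ (n + pmax)) => G special_free.
have noK := special_free _ (or_introl erefl).
have noK2 := special_free _ (or_intror (or_introl erefl)).
have noS := special_free _ (or_intror (or_intror erefl)).
have no_biclique := biclique_free_pow noK noK2.
rewrite ltnNge; apply/negP => /(Kn_free_indep noK)[I IS [iI ge_I]].
have [P PI cardP] := exists_subset_card ge_I.
have poolP : pool t pmax (n * n.+1) P (@nbhd G).
  split; rewrite ?cardP //.
  - by move=> x y xP yP; apply: iI; apply: (subsetP PI).
  - by move=> u /(subsetP PI) /(subsetP IS); rewrite inE.
have [F [packF _]] := pool_stars no_biclique poolP.
exact: noS (induced_mK1_of_packing packF).
Qed.

Theorem theorem1p12 (F : gfamily) :
  (exists c1 c2 : nat, forall G : sgraph, H_free F G ->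
      #|[set v : vert G | c1 <= deg v]| < c2)
  <->
  (exists n : nat, 0 < n /\ fam_le F (special_family n)).
Proof.
split=> [[c1 [c2 bounded]] | [n [_ le_F]]].
  by exists (c1 + c2).+1; split=> //; apply: fam_le_special_of_bounded.
have [c1 [c2 bounded]] := special_free_high_deg_bounded n.
exists c1, c2 => G freeG; apply: bounded => H specH indH.
have [H1 FH1 indH1] := le_F H specH.
exact: freeG FH1 (induced_sub_trans indH1 indH).
Qed.
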